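(* Let $\Sigma\cong\mathbb R^{10}$ have coordinates $(a_1,a_2,a_3,a_4,\alpha_1,\alpha_2,\alpha_3,\beta_1,\beta_2,\gamma)$, and consider the vector fields $$\mathbf V_1=-\alpha_1\partial_{a_2}-\alpha_2\partial_{a_3}+3\alpha_3\partial_{a_4}-2\beta_1\partial_{\alpha_2}+2\beta_2\partial_{\alpha_3}-\gamma\partial_{\beta_2},$$ $$\mathbf V_2=3\alpha_1\partial_{a_1}+\alpha_2\partial_{a_2}-\alpha_3\partial_{a_3}+2\beta_1\partial_{\alpha_1}+2\beta_2\partial_{\alpha_2}+\gamma\partial_{\beta_1},$$ $$\mathbf V_3=3a_2\partial_{a_1}+(2a_3-a_1)\partial_{a_2}+(a_4-2a_2)\partial_{a_3}-3a_3\partial_{a_4}+\alpha_2\partial_{\alpha_1}-2(\alpha_1+\alpha_3)\partial_{\alpha_2}+\alpha_2\partial_{\alpha_3}+\beta_2\partial_{\beta_1}-\beta_1\partial_{\beta_2},$$ $$\mathbf T_1=3\partial_{a_1}+\partial_{a_3},\qquad \mathbf T_2=\partial_{a_2}+3\partial_{a_4},\qquad \mathbf T_3=\partial_{\alpha_1}-\partial_{\alpha_3}.$$ Define the polynomials $\tilde I_1=\gamma\alpha_2-2\beta_1\beta_2$, $\tilde I_2=\gamma(\alpha_1+\alpha_3)+\beta_2^2-\beta_1^2$, $\tilde I_3=\gamma^2(a_1-3a_3)+3\gamma(\beta_2\alpha_2-\beta_1(\alpha_1+\alpha_3))+2\beta_1(\beta_1^2-3\beta_2^2)$, $\tilde I_4=\gamma^2(3a_2-a_4)-3\gamma(\beta_1\alpha_2+\beta_2(\alpha_1+\alpha_3))+2\beta_2(3\beta_1^2-\beta_2^2)$,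 and $I_1=2(\tilde I_1^2-3\tilde I_2^2)\tilde I_1\tilde I_3\tilde I_4+(3\tilde I_1^2-\tilde I_2^2)\tilde I_2(\tilde I_3^2-\tilde I_4^2)$, $I_2=\tilde I_1^2+\tilde I_2^2$, $I_3=\tilde I_3^2+\tilde I_4^2$, $I_4=\gamma$. Then $\tilde I_1,\dots,\tilde I_4,\gamma$ are annihilated by $\mathbf T_1,\mathbf T_2,\mathbf T_3,\mathbf V_1,\mathbf V_2$, and $I_1,I_2,I_3,I_4$ are homogeneous polynomials on $\Sigma$ annihilated by all six vector fields $\mathbf V_1,\mathbf V_2,\mathbf V_3,\mathbf T_1,\mathbf T_2,\mathbf T_3$.
   Context: Interpretation: points of $\Sigma$ parametrize Killing tensors $\mathbf L$ of valence three of the Euclidean plane via the Cartesian components $L^{111}=a_1+3\alpha_1y+3\beta_1y^2+\gamma y^3$, $L^{112}=a_2+\alpha_2y-\alpha_1x-2\beta_1xy+\beta_2y^2-\gamma xy^2$, $L^{122}=a_3-\alpha_2x-\alpha_3y-2\beta_2xy+\beta_1x^2+\gamma yx^2$, $L^{222}=a_4+3\alpha_3x+3\beta_2x^2-\gamma x^3$. $\mathbf V_1,\mathbf V_2,\mathbf V_3$ are the infinitesimal generators of the action induced on $\Sigma$ by the Euclidean isometry group (translations in $x$, $y$ and rotation), and $\mathbf T_1,\mathbf T_2,\mathbf T_3$ span the tangent directions of the subspace of trivial Killing tensors $\mathbf g\odot\mathbf X$ ($\mathbf X$ a Killing vector). Functions annihilated by all six fields are the isometry-group invariants of non-trivial valence-three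 Killing tensors. *)

From HB Require Import structures.
From mathcomp Require Import all_boot all_order all_algebra.
From mathcomp Require Import mpoly.
From Stdlib Require Import List.

Set Implicit Arguments.
Unset Strict Implicit.
Unset Printing Implicit Defensive.

Import GRing.Theory Num.Theory.
Local Open Scope ring_scope.

Section Sigma.
Variable R : realFieldType.
Notation P := {mpoly R[10]}.

Definition cX (i : nat) : P := 'X_(inord i).
Definition a1 := cX 0.  Definition a2 := cX 1.  Definition a3 := cX 2.
Definition a4 := cX 3.  Definition al1 := cX 4. Definition al2 := cX 5.
Definition al3 := cX 6. Definition be1 := cX 7. Definition be2 := cX 8.
Definition ga := cX 9.

Definition D (i : nat) (p : P) : P := mderiv (inord i) p.
Definition d_a1 := D 0.  Definition d_a2 := D 1.  Definition d_a3 := D 2.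
Definition d_a4 := D 3.  Definition d_al1 := D 4. Definition d_al2 := D 5.
Definition d_al3 := D 6. Definition d_be1 := D 7. Definition d_be2 := D 8.
Definition d_ga := D 9.

Definition V1 (p : P) : P :=
  - al1 * d_a2 p - al2 * d_a3 p + 3 * al3 * d_a4 p - 2 * be1 * d_al2 p
  + 2 * be2 * d_al3 p - ga * d_be2 p.
Definition V2 (p : P) : P :=
  3 * al1 * d_a1 p + al2 * d_a2 p - al3 * d_a3 p + 2 * be1 * d_al1 p
  + 2 * be2 * d_al2 p + ga * d_be1 p.
Definition V3 (p : P) : P :=
  3 * a2 * d_a1 p + (2 * a3 - a1) * d_a2 p + (a4 - 2 * a2) * d_a3 p
  - 3 * a3 * d_a4 p + al2 * d_al1 p - 2 * (al1 + al3) * d_al2 p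
  + al2 * d_al3 p + be2 * d_be1 p - be1 * d_be2 p.
Definition T1 (p : P) : P := 3 * d_a1 p + d_a3 p.
Definition T2 (p : P) : P := d_a2 p + 3 * d_a4 p.
Definition T3 (p : P) : P := d_al1 p - d_al3 p.

Definition tI1 : P := ga * al2 - 2 * be1 * be2.
Definition tI2 : P := ga * (al1 + al3) + be2 ^+ 2 - be1 ^+ 2.
Definition tI3 : P :=
  ga ^+ 2 * (a1 - 3 * a3) + 3 * ga * (be2 * al2 - be1 * (al1 + al3))
  + 2 * be1 * (be1 ^+ 2 - 3 * be2 ^+ 2).
Definition tI4 : P :=
  ga ^+ 2 * (3 * a2 - a4) - 3 * ga * (be1 * al2 + be2 * (al1 + al3))
  + 2 * be2 * (3 * be1 ^+ 2 - be2 ^+ 2).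

Definition I1 : P :=
  2 * (tI1 ^+ 2 - 3 * tI2 ^+ 2) * tI1 * tI3 * tI4
  + (3 * tI1 ^+ 2 - tI2 ^+ 2) * tI2 * (tI3 ^+ 2 - tI4 ^+ 2).
Definition I2 : P := tI1 ^+ 2 + tI2 ^+ 2.
Definition I3 : P := tI3 ^+ 2 + tI4 ^+ 2.
Definition I4 : P := ga.

Definition annihilates (Vs : list (P -> P)) (ps : list P) : Prop :=
  forall V p, In V Vs -> In p ps -> V p = 0.

End Sigma.

(* All six fields are derivations, so their action on I1, ..., I4 is
   determined by their action on tI1, ..., tI4 and ga.  A direct computation
   shows that they kill ga and act on z = tI1 + i tI2 and u = tI3 + i tI4 as
   infinitesimal rotations, V z = 2iw z and V u = -3iw u, with w = 1 for V3
   and w = 0 for the other five fields.  Hence |z|^2 = I2, |u|^2 = I3 and the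
   weight-zero combination Im (z^3 u^2) = I1 are annihilated, and so is
   I4 = ga. *)

From mathcomp Require Import all_boot all_algebra.
From mathcomp Require Import mpoly.
From mathcomp Require Import ring.
From Stdlib Require Import List.

Set Implicit Arguments.
Unset Strict Implicit.

Import GRing.Theory.
Local Open Scope ring_scope.

Section Derivation.
Variable A : comPzRingType.
Implicit Types (V W : A -> A) (c p q : A).

Definition derivation V :=
  {morph V : p q / p + q} /\ forall p q, V (p * q) = V p * q + p * V q.

Section Rules.
Variables (V : A -> A) (hV : derivation V).

Lemma derivationD : {morph V : p q / p + q}. Proof. by case: hV. Qed.

Lemma derivationM p q : V (p * q) = V p * q + p * V q. Proof. by case: hV. Qed.

Lemma derivation0 : V 0 = 0.
Proof. by apply: (addrI (V 0)); rewrite addr0 -derivationD addr0. Qed.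

Lemma derivationN p : V (- p) = - V p.
Proof. by apply: (addrI (V p)); rewrite -derivationD !subrr derivation0. Qed.

Lemma derivation1 : V 1 = 0.
Proof.
have h11 := derivationM 1 1; rewrite !mulr1 mul1r in h11.
by apply: (addrI (V 1)); rewrite addr0 -h11.
Qed.

Lemma derivation_nat n : V n%:R = 0.
Proof.
by elim: n => [|n IHn]; rewrite ?derivation0 // mulrS derivationD derivation1 IHn addr0.
Qed.

End Rules.

Lemma derivation_add V W :
  derivation V -> derivation W -> derivation (fun p => V p + W p).
Proof. by move=> [VD VM] [WD WM]; split=> p q; rewrite ?VD ?WD ?VM ?WM; ring. Qed.

Lemma derivation_sub V W :
  derivation V -> derivation W -> derivation (fun p => V p - W p).
Proof. by move=> [VD VM] [WD WM]; split=> p q; rewrite ?VD ?WD ?VM ?WM; ring. Qed.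

Lemma derivation_mull c V : derivation V -> derivation (fun p => c * V p).
Proof. by move=> [VD VM]; split=> p q; rewrite ?VD ?VM; ring. Qed.

End Derivation.

Ltac expand_derivation hV := rewrite ?(derivation_nat hV, derivation1 hV,
  derivationN hV, derivationD hV, derivationM hV).

Lemma derivation_rotation_invariants (A : comPzRingType) (V : A -> A)
    (w t1 t2 t3 t4 : A) :
  derivation V ->
  V t1 = - (2 * w) * t2 -> V t2 = 2 * w * t1 ->
  V t3 = 3 * w * t4 -> V t4 = - (3 * w) * t3 ->
  [/\ V (t1 ^+ 2 + t2 ^+ 2) = 0, V (t3 ^+ 2 + t4 ^+ 2) = 0
    & V (2 * (t1 ^+ 2 - 3 * t2 ^+ 2) * t1 * t3 * t4
         + (3 * t1 ^+ 2 - t2 ^+ 2) * t2 * (t3 ^+ 2 - t4 ^+ 2)) = 0].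
Proof.
move=> hV h1 h2 h3 h4; rewrite !expr2.
by split; expand_derivation hV; rewrite ?h1 ?h2 ?h3 ?h4; ring.
Qed.

Lemma derivation_mderiv (R : comNzRingType) n (i : 'I_n) :
  derivation (@mderiv n R i).
Proof. by split=> [p q|p q]; [exact: mderivD | exact: mderivM]. Qed.

Section Sigma.
Variable R : realFieldType.
Notation P := {mpoly R[10]}.

Lemma D_cX i j : (i < 10)%N -> (j < 10)%N -> D i (cX R j) = (i == j)%:R.
Proof.
move=> ilt jlt; rewrite /D /cX mderivX mnm1E.
have -> : (@inord 9 j == inord i) = (i == j).
  by apply/eqP/eqP => [/(congr1 val)|->] //; rewrite /= !inordK // => ->.
case: eqP => [<-|_]; last by rewrite scale0r.
have -> : (U_(@inord 9 i) - U_(inord i))%MM = 0%MM.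
  by apply/mnmP => k; rewrite mnmBE mnm0E subnn.
by rewrite mpolyX0 scale1r.
Qed.

Lemma derivation_D i : derivation (@D R i).
Proof. exact: derivation_mderiv. Qed.

Ltac derivation_by_closure := repeat first
  [ apply: derivation_sub | apply: derivation_add
  | apply: derivation_mull | exact: derivation_D ].

Lemma V1_derivation : derivation (@V1 R).
Proof. by rewrite /V1; derivation_by_closure. Qed.
Lemma V2_derivation : derivation (@V2 R).
Proof. by rewrite /V2; derivation_by_closure. Qed.
Lemma V3_derivation : derivation (@V3 R).
Proof. by rewrite /V3; derivation_by_closure. Qed.
Lemma T1_derivation : derivation (@T1 R).
Proof. by rewrite /T1; derivation_by_closure. Qed.
Lemma T2_derivation : derivation (@T2 R).
Proof. by rewrite /T2; derivation_by_closure. Qed.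
Lemma T3_derivation : derivation (@T3 R).
Proof. by rewrite /T3; derivation_by_closure. Qed.

Lemma annihilates_Forall (Vs : list (P -> P)) (ps : list P) :
  Forall (fun V => Forall (fun p => V p = 0) ps) Vs -> annihilates Vs ps.
Proof. by move=> /Forall_forall hVs V p /hVs /Forall_forall; apply. Qed.

Definition rotates (X : P -> P) (w : P) :=
  derivation X /\
  [/\ X (ga R) = 0, X (tI1 R) = - (2 * w) * tI2 R, X (tI2 R) = 2 * w * tI1 R,
      X (tI3 R) = 3 * w * tI4 R & X (tI4 R) = - (3 * w) * tI3 R].

Ltac rotation_by_expansion hX :=
  split; first exact: hX;
  split; rewrite /tI1 /tI2 /tI3 /tI4; expand_derivation hX;
  rewrite /V1 /V2 /V3 /T1 /T2 /T3 /d_a1 /d_a2 /d_a3 /d_a4 /d_al1 /d_al2 /d_al3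
    /d_be1 /d_be2 /d_ga /a1 /a2 /a3 /a4 /al1 /al2 /al3 /be1 /be2 /ga !D_cX //=;
  ring.

Lemma T1_rotates : rotates (@T1 R) 0.
Proof. rotation_by_expansion T1_derivation. Qed.
Lemma T2_rotates : rotates (@T2 R) 0.
Proof. rotation_by_expansion T2_derivation. Qed.
Lemma T3_rotates : rotates (@T3 R) 0.
Proof. rotation_by_expansion T3_derivation. Qed.
Lemma V1_rotates : rotates (@V1 R) 0.
Proof. rotation_by_expansion V1_derivation. Qed.
Lemma V2_rotates : rotates (@V2 R) 0.
Proof. rotation_by_expansion V2_derivation. Qed.
Lemma V3_rotates : rotates (@V3 R) 1.
Proof. rotation_by_expansion V3_derivation. Qed.

Lemma rotates0_annihilates_tI X :
  rotates X 0 -> Forall (fun p => X p = 0) [:: tI1 R; tI2 R; tI3 R; tI4 R; ga R].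
Proof.
case=> _ [h0 h1 h2 h3 h4]; rewrite !(mulr0, mul0r, oppr0) in h1 h2 h3 h4.
by do ![apply: Forall_cons | apply: Forall_nil]; assumption.
Qed.

Lemma rotates_annihilates_I X w :
  rotates X w -> Forall (fun p => X p = 0) [:: I1 R; I2 R; I3 R; I4 R].
Proof.
case=> hX [h0 h1 h2 h3 h4].
have [hI2 hI3 hI1] := derivation_rotation_invariants hX h1 h2 h3 h4.
by do ![apply: Forall_cons | apply: Forall_nil]; assumption.
Qed.

Lemma cX_homog j : cX R j \is 1.-homog.
Proof. by rewrite /cX dhomogX; apply/eqP/mdeg1. Qed.

Lemma natr_homog n : (n%:R : P) \is 0.-homog.
Proof. exact/rpredMn/dhomog1. Qed.

(* Degrees as side equations, so that [solve_homog] infers them bottom-up. *)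
Lemma dhomogM_eq d e f (p q : P) :
  p \is d.-homog -> q \is e.-homog -> (d + e)%N = f -> p * q \is f.-homog.
Proof. by move=> hp hq <-; apply: dhomogM. Qed.

Lemma dhomogX_eq d k f (p : P) :
  p \is d.-homog -> (d * k)%N = f -> p ^+ k \is f.-homog.
Proof. by move=> hp <-; apply: dhomogMn. Qed.

Ltac solve_homog := lazymatch goal with
  | |- is_true ((_ + _) \in _) => apply: rpredD; solve_homog
  | |- is_true ((- _) \in _) => rewrite rpredN; solve_homog
  | |- is_true ((_ * _) \in _) =>
      apply: dhomogM_eq; [solve_homog | solve_homog | reflexivity]
  | |- is_true ((_ ^+ _) \in _) => apply: dhomogX_eq; [solve_homog | reflexivity]
  | |- is_true ((_%:R) \in _) => exact: natr_homog
  | |- _ => first [exact: cX_homog | eassumption]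
  end.

Lemma tI_homog :
  [/\ tI1 R \is 2.-homog, tI2 R \is 2.-homog, tI3 R \is 3.-homog & tI4 R \is 3.-homog].
Proof. by rewrite /tI1 /tI2 /tI3 /tI4; split; solve_homog. Qed.

Lemma I_homog :
  [/\ I1 R \is 12.-homog, I2 R \is 4.-homog, I3 R \is 6.-homog & I4 R \is 1.-homog].
Proof.
by have [? ? ? ?] := tI_homog; rewrite /I1 /I2 /I3 /I4; split; solve_homog.
Qed.

End Sigma.

Theorem mainTheorem4 (R : realFieldType) :
  annihilates [:: @T1 R; @T2 R; @T3 R; @V1 R; @V2 R]
              [:: @tI1 R; @tI2 R; @tI3 R; @tI4 R; @ga R]
  /\ annihilates [:: @V1 R; @V2 R; @V3 R; @T1 R; @T2 R; @T3 R]
                 [:: @I1 R; @I2 R; @I3 R; @I4 R]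
  /\ (@I1 R \is homog mdeg) /\ (@I2 R \is homog mdeg)
  /\ (@I3 R \is homog mdeg) /\ (@I4 R \is homog mdeg).
Proof.
split; [|split].
- apply: annihilates_Forall.
  do ![apply: Forall_cons; first apply: rotates0_annihilates_tI
      | apply: Forall_nil].
  + exact: T1_rotates.
  + exact: T2_rotates.
  + exact: T3_rotates.
  + exact: V1_rotates.
  + exact: V2_rotates.
- apply: annihilates_Forall.
  do ![apply: Forall_cons; first apply: rotates_annihilates_I
      | apply: Forall_nil].
  + exact: V1_rotates.
  + exact: V2_rotates.
  + exact: V3_rotates.
  + exact: T1_rotates.
  + exact: T2_rotates.
  + exact: T3_rotates.
- have [h1 h2 h3 h4] := I_homog R.
  by rewrite (homogE h1) (homogE h2) (homogE h3) (homogE h4).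
Qed.
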